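(* Let $h_1,h_2,g_1,g_2>0$ be real numbers. For $\Delta_1,\Delta_2>0$ and $\Omega\subseteq\{1,2\}$ define (all logarithms base $2$, $[x]^+=\max\{x,0\}$) \begin{align*} R(\emptyset;\Delta_1,\Delta_2)&=\Big[\log\Big(1+\tfrac{h_1^2}{1+\Delta_1}+\tfrac{h_2^2}{1+\Delta_2}\Big)\Big]^+,\\ R(\{1\};\Delta_1,\Delta_2)&=\Big[\log(1+g_1^2)+\log\Big(1+\tfrac{h_2^2}{1+\Delta_2}\Big)-\log\tfrac{1+\Delta_1}{\Delta_1}\Big]^+,\\ R(\{2\};\Delta_1,\Delta_2)&=\Big[\log(1+g_2^2)+\log\Big(1+\tfrac{h_1^2}{1+\Delta_1}\Big)-\log\tfrac{1+\Delta_2}{\Delta_2}\Big]^+,\\ R(\{1,2\};\Delta_1,\Delta_2)&=\Big[\log(1+g_1^2+g_2^2)-\log\tfrac{1+\Delta_1}{\Delta_1}-\log\tfrac{1+\Delta_2}{\Delta_2}\Big]^+. \end{align*} Let $$\delta_1:=\frac{(1+g_1^2+g_2^2)(1+h_1^2+h_2^2)+(1+g_2^2)h_1^2h_2^2}{g_2^2(1+g_1^2+g_2^2)(1+h_1^2)},\qquad \delta_2:=\frac{(1+g_1^2)(1+h_2^2)}{g_2^2},$$ and $\mathcal I_1=(0,\delta_1)$, $\mathcal I_2=[\delta_1,\delta_2)$, $\mathcal I_3=[\delta_2,\infty)$. Then $0<\delta_1<\delta_2$ (so the three intervals are nonempty), and for fixed $\Delta_2>0$, the optimizing $\Delta_1^*$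 of the max-min problem $\max_{\Delta_1>0}\min_{\Omega\subseteq\{1,2\}}R(\Omega;\Delta_1,\Delta_2)$ and the minimizing cut $\Omega^*$ at this optimum are: \begin{itemize} \item if $\Delta_2\in\mathcal I_1$: $\Delta_1^*=\frac{(1+g_2^2)(1+h_1^2)}{g_1^2}$, and $\Omega^*=\{1,2\}$ or $\{2\}$; \item if $\Delta_2\in\mathcal I_2$: $\Delta_1^*=\frac{(1+h_1^2)\Delta_2+(1+h_1^2+h_2^2)}{(g_1^2+g_2^2)\Delta_2-(1+h_2^2)}$, and $\Omega^*=\{1,2\}$ or $\emptyset$; \item if $\Delta_2\in\mathcal I_3$: $\Delta_1^*=\frac{(1+h_1^2)\Delta_2+(1+h_1^2+h_2^2)}{g_1^2(\Delta_2+(1+h_2^2))}$, and $\Omega^*=\{1\}$ or $\emptyset$. \end{itemize}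
   Context: This concerns the full-duplex two-relay Gaussian diamond network: source $S$, relays $A_1,A_2$, destination $D$, with channel magnitudes $h_i$ ($S\to A_i$) and $g_i$ ($A_i\to D$). Relay $i$ uses a Gaussian vector quantizer with distortion $\Delta_i$ (quantized signal $\hat Y_i=Y_i+\hat Z_i$, $\hat Z_i\sim\mathcal{CN}(0,\Delta_i)$), and $R(\Omega;\Delta_1,\Delta_2)$ is the resulting quantize-map-and-forward rate expression for the cut $\Omega$ (the QMF achievable rate is $\min_\Omega R(\Omega;\Delta_1,\Delta_2)$). *)

From Stdlib Require Import Reals.
Open Scope R_scope.

Definition log2 (x : R) : R := ln x / ln 2.
Definition pos (x : R) : R := Rmax x 0.

Inductive cut : Type := Cut_empty | Cut_1 | Cut_2 | Cut_12.

Definition rate (h1 h2 g1 g2 : R) (Om : cut) (D1 D2 : R) : R :=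
  match Om with
  | Cut_empty => pos (log2 (1 + h1^2 / (1 + D1) + h2^2 / (1 + D2)))
  | Cut_1 => pos (log2 (1 + g1^2) + log2 (1 + h2^2 / (1 + D2)) - log2 ((1 + D1) / D1))
  | Cut_2 => pos (log2 (1 + g2^2) + log2 (1 + h1^2 / (1 + D1)) - log2 ((1 + D2) / D2))
  | Cut_12 => pos (log2 (1 + g1^2 + g2^2) - log2 ((1 + D1) / D1) - log2 ((1 + D2) / D2))
  end.

Definition minrate (h1 h2 g1 g2 D1 D2 : R) : R :=
  Rmin (Rmin (rate h1 h2 g1 g2 Cut_empty D1 D2) (rate h1 h2 g1 g2 Cut_1 D1 D2))
       (Rmin (rate h1 h2 g1 g2 Cut_2 D1 D2) (rate h1 h2 g1 g2 Cut_12 D1 D2)).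

Definition is_opt (h1 h2 g1 g2 D2 D1 : R) : Prop :=
  0 < D1 /\ forall D, 0 < D -> minrate h1 h2 g1 g2 D D2 <= minrate h1 h2 g1 g2 D1 D2.

Definition min_cut (h1 h2 g1 g2 D1 D2 : R) (Om : cut) : Prop :=
  rate h1 h2 g1 g2 Om D1 D2 = minrate h1 h2 g1 g2 D1 D2.

Definition delta1 (h1 h2 g1 g2 : R) : R :=
  ((1 + g1^2 + g2^2) * (1 + h1^2 + h2^2) + (1 + g2^2) * h1^2 * h2^2)
  / (g2^2 * (1 + g1^2 + g2^2) * (1 + h1^2)).
Definition delta2 (h1 h2 g1 g2 : R) : R := (1 + g1^2) * (1 + h2^2) / g2^2.

From Pilot Require Import Defs.
From Stdlib Require Import Reals Lra Psatz.
Open Scope R_scope.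

(* All four cut rates are [log2] of a numerator over the common denominator
   (1 + D1)(1 + D2), so minimising over cuts only compares numerators, which are
   polynomial in D1.  The rates of the cuts containing relay 1 increase in D1,
   the other two decrease, hence the max-min over D1 is attained where an
   increasing and a decreasing cut tie while both realise the minimum.  Which pair
   ties is decided by the sign of D2 - delta1 and D2 - delta2, which appear as
   factors of the differences of numerators at the candidate optimum. *)

Lemma ln2_pos : 0 < ln 2.
Proof. pose proof ln_lt_2; lra. Qed.

Lemma log2_le u v : 0 < u -> u <= v -> log2 u <= log2 v.
Proof.
  intros Hu [Huv | <-]; [|lra].
  apply Rmult_le_compat_r.
  - left; apply Rinv_0_lt_compat, ln2_pos.
  - left; apply ln_increasing; lra.
Qed.

Lemma log2_mult u v : 0 < u -> 0 < v -> log2 (u * v) = log2 u + log2 v.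
Proof.
  intros; unfold log2; rewrite ln_mult by assumption.
  field; apply Rgt_not_eq, ln2_pos.
Qed.

Lemma log2_div u v : 0 < u -> 0 < v -> log2 (u / v) = log2 u - log2 v.
Proof.
  intros; unfold log2, Rdiv.
  rewrite ln_mult, ln_Rinv by (try apply Rinv_0_lt_compat; assumption).
  field; apply Rgt_not_eq, ln2_pos.
Qed.

Lemma pos_le u v : u <= v -> Defs.pos u <= Defs.pos v.
Proof. apply Rle_max_compat_r. Qed.

Lemma Rdiv_le_cross u v p q : 0 < p -> 0 < q -> u * q <= v * p -> u / p <= v / q.
Proof.
  intros Hp Hq H.
  replace (u / p) with (u * q * / (p * q)) by (field; lra).
  replace (v / q) with (v * p * / (p * q)) by (field; lra).
  apply Rmult_le_compat_r; [left; apply Rinv_0_lt_compat; nra | exact H].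
Qed.

Lemma argmax_at_crossing (F f g : R -> R) x :
  (forall u, 0 < u -> F u <= f u) -> (forall u, 0 < u -> F u <= g u) ->
  (forall u, 0 < u -> u <= x -> f u <= f x) -> (forall u, x <= u -> g u <= g x) ->
  f x = F x -> g x = F x -> forall u, 0 < u -> F u <= F x.
Proof.
  intros Hf Hg f_mono g_anti Hfx Hgx u Hu.
  destruct (Rle_dec u x) as [Hux | Hxu].
  - rewrite <- Hfx; apply (Rle_trans _ (f u)); auto.
  - rewrite <- Hgx; apply (Rle_trans _ (g u)); auto with real.
Qed.

Ltac sign_tac :=
  repeat match goal with
  | |- 0 < _ * _ => apply Rmult_lt_0_compat
  | |- 0 <= _ * _ => apply Rmult_le_pos
  | |- 0 < _ + _ => apply Rplus_lt_le_0_compat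
  | |- 0 <= _ + _ => apply Rplus_le_le_0_compat
  | |- 0 < _ / _ => apply Rdiv_lt_0_compat
  | |- 0 <= _ / _ => apply Rle_mult_inv_pos
  | |- 0 <= _ ^ 2 => apply pow2_ge_0
  end; lra.

Ltac nonzero_tac := repeat split; apply Rgt_not_eq; unfold Rgt; sign_tac.

Lemma minrate_le_rate h1 h2 g1 g2 x y Om :
  minrate h1 h2 g1 g2 x y <= rate h1 h2 g1 g2 Om x y.
Proof.
  unfold minrate; destruct Om.
  - apply (Rle_trans _ _ _ (Rmin_l _ _)), Rmin_l.
  - apply (Rle_trans _ _ _ (Rmin_l _ _)), Rmin_r.
  - apply (Rle_trans _ _ _ (Rmin_r _ _)), Rmin_l.
  - apply (Rle_trans _ _ _ (Rmin_r _ _)), Rmin_r.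
Qed.

Lemma minrate_eq_rate h1 h2 g1 g2 x y Om :
  (forall Om', rate h1 h2 g1 g2 Om x y <= rate h1 h2 g1 g2 Om' x y) ->
  minrate h1 h2 g1 g2 x y = rate h1 h2 g1 g2 Om x y.
Proof.
  intros Hmin; apply Rle_antisym; [apply minrate_le_rate|].
  unfold minrate; repeat apply Rmin_glb; apply Hmin.
Qed.

Section Rates.
Variables h1 h2 g1 g2 : R.
Local Notation a := (h1 ^ 2).
Local Notation b := (h2 ^ 2).
Local Notation c := (g1 ^ 2).
Local Notation d := (g2 ^ 2).

Definition cut_num (Om : cut) (x y : R) : R :=
  match Om with
  | Cut_empty => (1 + x + a) * (1 + y) + b * (1 + x)
  | Cut_1 => (1 + c) * (1 + y + b) * x
  | Cut_2 => (1 + d) * (1 + x + a) * y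
  | Cut_12 => (1 + c + d) * x * y
  end.

Lemma cut_num_pos Om x y : 0 < x -> 0 < y -> 0 < cut_num Om x y.
Proof. intros; destruct Om; unfold cut_num; sign_tac. Qed.

Lemma rate_cut_num Om x y : 0 < x -> 0 < y ->
  rate h1 h2 g1 g2 Om x y = Defs.pos (log2 (cut_num Om x y / ((1 + x) * (1 + y)))).
Proof.
  intros Hx Hy; destruct Om; unfold rate, cut_num; f_equal;
    repeat (rewrite <- log2_mult by sign_tac); repeat (rewrite <- log2_div by sign_tac);
    f_equal; field; lra.
Qed.

Lemma rate_le_cross Om Om' x x' y : 0 < x -> 0 < x' -> 0 < y ->
  cut_num Om x y * (1 + x') <= cut_num Om' x' y * (1 + x) ->
  rate h1 h2 g1 g2 Om x y <= rate h1 h2 g1 g2 Om' x' y.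
Proof.
  intros Hx Hx' Hy Hcross; rewrite !rate_cut_num by assumption.
  apply pos_le, log2_le.
  - apply Rdiv_lt_0_compat; [apply cut_num_pos|sign_tac]; assumption.
  - apply Rdiv_le_cross; [sign_tac | sign_tac |].
    assert (0 <= (1 + y) * (cut_num Om' x' y * (1 + x) - cut_num Om x y * (1 + x')))
      by (apply Rmult_le_pos; lra).
    lra.
Qed.

Lemma rate_le_of_num_le Om Om' x y : 0 < x -> 0 < y ->
  cut_num Om x y <= cut_num Om' x y ->
  rate h1 h2 g1 g2 Om x y <= rate h1 h2 g1 g2 Om' x y.
Proof. intros; apply rate_le_cross; try apply Rmult_le_compat_r; lra. Qed.

Definition in_cut1 (Om : cut) : bool :=
  match Om with Cut_1 | Cut_12 => true | Cut_empty | Cut_2 => false end.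

Lemma rate_monotone_D1 Om u v y : 0 < u -> u <= v -> 0 < y ->
  if in_cut1 Om then rate h1 h2 g1 g2 Om u y <= rate h1 h2 g1 g2 Om v y
  else rate h1 h2 g1 g2 Om v y <= rate h1 h2 g1 g2 Om u y.
Proof.
  intros Hu Huv Hy; pose proof (pow2_ge_0 h1); pose proof (pow2_ge_0 h2);
    pose proof (pow2_ge_0 g1); pose proof (pow2_ge_0 g2).
  destruct Om; unfold in_cut1; apply rate_le_cross; try lra; unfold cut_num.
  - assert (0 <= a * (1 + y) * (v - u)) by (apply Rmult_le_pos; sign_tac || lra). lra.
  - assert (0 <= (1 + c) * (1 + y + b) * (v - u)) by (apply Rmult_le_pos; sign_tac || lra). lra.
  - assert (0 <= (1 + d) * y * a * (v - u)) by (apply Rmult_le_pos; sign_tac || lra). lra.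
  - assert (0 <= (1 + c + d) * y * (v - u)) by (apply Rmult_le_pos; sign_tac || lra). lra.
Qed.

Lemma opt_at_crossing I J x y :
  in_cut1 I = true -> in_cut1 J = false -> 0 < x -> 0 < y ->
  cut_num I x y = cut_num J x y -> (forall Om, cut_num I x y <= cut_num Om x y) ->
  is_opt h1 h2 g1 g2 y x /\ min_cut h1 h2 g1 g2 x y I /\ min_cut h1 h2 g1 g2 x y J.
Proof.
  intros HI HJ Hx Hy Htie Hmin.
  assert (Hrate_tie : rate h1 h2 g1 g2 I x y = rate h1 h2 g1 g2 J x y)
    by (rewrite !rate_cut_num, Htie by assumption; reflexivity).
  assert (Hmin_rate : minrate h1 h2 g1 g2 x y = rate h1 h2 g1 g2 I x y)
    by (apply minrate_eq_rate; intros; apply rate_le_of_num_le; auto).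
  unfold is_opt, min_cut; split; [split; [exact Hx|] | split; congruence].
  apply (argmax_at_crossing (fun u => minrate h1 h2 g1 g2 u y)
           (fun u => rate h1 h2 g1 g2 I u y) (fun u => rate h1 h2 g1 g2 J u y));
    intros; try apply minrate_le_rate; try congruence.
  - pose proof (rate_monotone_D1 I u x y) as Hmono; rewrite HI in Hmono; auto.
  - pose proof (rate_monotone_D1 J x u y) as Hmono; rewrite HJ in Hmono; auto.
Qed.

Lemma cut_num_empty_sub_12 x y :
  cut_num Cut_empty x y - cut_num Cut_12 x y
  = (1 + a) * y + (1 + a + b) - x * ((c + d) * y - (1 + b)).
Proof. unfold cut_num; ring. Qed.

Lemma cut_num_empty_sub_1 x y :
  cut_num Cut_empty x y - cut_num Cut_1 x y
  = (1 + a) * y + (1 + a + b) - c * x * (y + 1 + b).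
Proof. unfold cut_num; ring. Qed.

Lemma cut_num_2_sub_12 x y :
  cut_num Cut_2 x y - cut_num Cut_12 x y = y * ((1 + d) * (1 + a) - c * x).
Proof. unfold cut_num; ring. Qed.

Lemma cut_num_12_le_2 x y : 0 < y -> c * x <= (1 + d) * (1 + a) ->
  cut_num Cut_12 x y <= cut_num Cut_2 x y.
Proof.
  intros Hy Hcx; pose proof (cut_num_2_sub_12 x y).
  assert (0 <= y * ((1 + d) * (1 + a) - c * x)) by (apply Rmult_le_pos; lra).
  lra.
Qed.

Hypotheses (Hg1 : 0 < g1) (Hg2 : 0 < g2).

Let c_pos : 0 < c. Proof. apply pow_lt, Hg1. Qed.
Let d_pos : 0 < d. Proof. apply pow_lt, Hg2. Qed.

Lemma cut_num_1_sub_12 x y :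
  cut_num Cut_1 x y - cut_num Cut_12 x y = d * x * (delta2 h1 h2 g1 g2 - y).
Proof. unfold cut_num, delta2; field; lra. Qed.

Lemma cut_num_12_le_1 x y : 0 < x -> y <= delta2 h1 h2 g1 g2 ->
  cut_num Cut_12 x y <= cut_num Cut_1 x y.
Proof.
  intros Hx Hy; pose proof (cut_num_1_sub_12 x y).
  assert (0 <= d * x * (delta2 h1 h2 g1 g2 - y)) by (apply Rmult_le_pos; [sign_tac | lra]).
  lra.
Qed.

Lemma cut_num_1_le_12 x y : 0 < x -> delta2 h1 h2 g1 g2 <= y ->
  cut_num Cut_1 x y <= cut_num Cut_12 x y.
Proof.
  intros Hx Hy; pose proof (cut_num_1_sub_12 x y).
  assert (0 <= d * x * (y - delta2 h1 h2 g1 g2)) by (apply Rmult_le_pos; [sign_tac | lra]).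
  lra.
Qed.

Lemma delta1_crossing y :
  (1 + d) * (1 + a) * ((c + d) * y - (1 + b)) - c * ((1 + a) * y + (1 + a + b))
  = d * (1 + c + d) * (1 + a) * (y - delta1 h1 h2 g1 g2).
Proof. unfold delta1; field; nonzero_tac. Qed.

Lemma delta1_pos : 0 < delta1 h1 h2 g1 g2.
Proof. unfold delta1; sign_tac. Qed.

Lemma delta1_lt_delta2 : delta1 h1 h2 g1 g2 < delta2 h1 h2 g1 g2.
Proof.
  assert (Hgap : delta2 h1 h2 g1 g2 - delta1 h1 h2 g1 g2
                 = c * ((1 + c + d) * (1 + a) * (1 + b) + a * b) / (d * (1 + c + d) * (1 + a)))
    by (unfold delta1, delta2; field; nonzero_tac).
  assert (0 < c * ((1 + c + d) * (1 + a) * (1 + b) + a * b) / (d * (1 + c + d) * (1 + a)))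
    by sign_tac.
  lra.
Qed.

Lemma opt_small_D2 y : 0 < y -> y < delta1 h1 h2 g1 g2 ->
  let x := (1 + d) * (1 + a) / c in
  is_opt h1 h2 g1 g2 y x /\ min_cut h1 h2 g1 g2 x y Cut_12 /\ min_cut h1 h2 g1 g2 x y Cut_2.
Proof.
  intros Hy Hy1 x.
  assert (Hx : 0 < x) by (unfold x; sign_tac).
  assert (Hcx : c * x = (1 + d) * (1 + a)) by (unfold x; field; lra).
  assert (Htie : cut_num Cut_2 x y - cut_num Cut_12 x y = 0)
    by (rewrite cut_num_2_sub_12, Hcx; ring).
  apply opt_at_crossing; try reflexivity; try lra.
  intros []; try lra.
  - assert (Hscaled : c * (cut_num Cut_empty x y - cut_num Cut_12 x y)
                      = d * (1 + c + d) * (1 + a) * (delta1 h1 h2 g1 g2 - y)).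
    { rewrite cut_num_empty_sub_12.
      replace (c * ((1 + a) * y + (1 + a + b) - x * ((c + d) * y - (1 + b))))
        with (c * ((1 + a) * y + (1 + a + b)) - c * x * ((c + d) * y - (1 + b))) by ring.
      rewrite Hcx; pose proof (delta1_crossing y); lra. }
    assert (0 < d * (1 + c + d) * (1 + a) * (delta1 h1 h2 g1 g2 - y))
      by (apply Rmult_lt_0_compat; [sign_tac | lra]).
    nra.
  - apply cut_num_12_le_1; [exact Hx|].
    pose proof delta1_lt_delta2; lra.
Qed.

Lemma opt_mid_D2 y : delta1 h1 h2 g1 g2 <= y < delta2 h1 h2 g1 g2 ->
  let x := ((1 + a) * y + (1 + a + b)) / ((c + d) * y - (1 + b)) in
  is_opt h1 h2 g1 g2 y x /\ min_cut h1 h2 g1 g2 x y Cut_12 /\ min_cut h1 h2 g1 g2 x y Cut_empty.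
Proof.
  intros [Hy1 Hy2] x.
  assert (Hy : 0 < y) by (pose proof delta1_pos; lra).
  assert (Hcross := delta1_crossing y).
  assert (Hgap : 0 <= d * (1 + c + d) * (1 + a) * (y - delta1 h1 h2 g1 g2))
    by (apply Rmult_le_pos; [sign_tac | lra]).
  assert (Hnum : 0 < c * ((1 + a) * y + (1 + a + b))) by sign_tac.
  assert (Hden : 0 < (c + d) * y - (1 + b)).
  { assert (0 < (1 + d) * (1 + a) * ((c + d) * y - (1 + b))) by lra.
    assert (0 < (1 + d) * (1 + a)) by sign_tac.
    nra. }
  assert (Hx : 0 < x) by (unfold x; apply Rdiv_lt_0_compat; [sign_tac | exact Hden]).
  assert (Hxden : x * ((c + d) * y - (1 + b)) = (1 + a) * y + (1 + a + b))
    by (unfold x; field; lra).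
  apply opt_at_crossing; try reflexivity; try lra.
  - pose proof (cut_num_empty_sub_12 x y); lra.
  - intros []; try lra.
    + pose proof (cut_num_empty_sub_12 x y); lra.
    + apply cut_num_12_le_1; lra.
    + apply cut_num_12_le_2; [exact Hy|].
      apply (Rmult_le_reg_r ((c + d) * y - (1 + b))); [exact Hden|].
      replace (c * x * ((c + d) * y - (1 + b))) with (c * (x * ((c + d) * y - (1 + b)))) by ring.
      rewrite Hxden; lra.
Qed.

Lemma opt_large_D2 y : delta2 h1 h2 g1 g2 <= y ->
  let x := ((1 + a) * y + (1 + a + b)) / (c * (y + (1 + b))) in
  is_opt h1 h2 g1 g2 y x /\ min_cut h1 h2 g1 g2 x y Cut_1 /\ min_cut h1 h2 g1 g2 x y Cut_empty.
Proof.
  intros Hy2 x.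
  assert (Hy : 0 < y) by (pose proof delta1_pos; pose proof delta1_lt_delta2; lra).
  assert (Hx : 0 < x) by (unfold x; sign_tac).
  assert (Hcx : c * x * (y + 1 + b) = (1 + a) * y + (1 + a + b)) by (unfold x; field; nonzero_tac).
  assert (Hle12 := cut_num_1_le_12 x y Hx Hy2).
  apply opt_at_crossing; try reflexivity; try lra.
  - pose proof (cut_num_empty_sub_1 x y); lra.
  - intros []; try lra.
    + pose proof (cut_num_empty_sub_1 x y); lra.
    + apply (Rle_trans _ _ _ Hle12), cut_num_12_le_2; [exact Hy|].
      apply (Rmult_le_reg_r (y + 1 + b)); [sign_tac|].
      rewrite Hcx.
      assert (0 <= d * (1 + a) * (y + 1 + b) + a * b) by sign_tac.
      lra.
Qed.
End Rates.

Theorem lemma1 (h1 h2 g1 g2 : R) :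
  0 < h1 -> 0 < h2 -> 0 < g1 -> 0 < g2 ->
  0 < delta1 h1 h2 g1 g2 < delta2 h1 h2 g1 g2 /\
  forall D2 : R, 0 < D2 ->
    (D2 < delta1 h1 h2 g1 g2 ->
      let D1 := (1 + g2^2) * (1 + h1^2) / g1^2 in
      is_opt h1 h2 g1 g2 D2 D1 /\
      min_cut h1 h2 g1 g2 D1 D2 Cut_12 /\ min_cut h1 h2 g1 g2 D1 D2 Cut_2) /\
    (delta1 h1 h2 g1 g2 <= D2 < delta2 h1 h2 g1 g2 ->
      let D1 := ((1 + h1^2) * D2 + (1 + h1^2 + h2^2))
                / ((g1^2 + g2^2) * D2 - (1 + h2^2)) in
      is_opt h1 h2 g1 g2 D2 D1 /\
      min_cut h1 h2 g1 g2 D1 D2 Cut_12 /\ min_cut h1 h2 g1 g2 D1 D2 Cut_empty) /\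
    (delta2 h1 h2 g1 g2 <= D2 ->
      let D1 := ((1 + h1^2) * D2 + (1 + h1^2 + h2^2))
                / (g1^2 * (D2 + (1 + h2^2))) in
      is_opt h1 h2 g1 g2 D2 D1 /\
      min_cut h1 h2 g1 g2 D1 D2 Cut_1 /\ min_cut h1 h2 g1 g2 D1 D2 Cut_empty).
Proof.
  intros _ _ Hg1 Hg2.
  split; [split; [apply delta1_pos | apply delta1_lt_delta2]; assumption |].
  intros D2 HD2; split; [|split]; intro HD2_range.
  - now apply opt_small_D2.
  - now apply opt_mid_D2.
  - now apply opt_large_D2.
Qed.
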